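(* Let $d\geq 2$ be an integer. For integers $a \le b$ write $[[a,b]] = \{a,a+1,\ldots,b\}$. Let $(R_m)_{m \geq 0}$ be a sequence of boxes $R_m = [[0,x_{1,m}]] \times \cdots \times [[0,x_{d,m}]] \subset \mathbb{Z}^d$ with $R_0 = \{(0,\ldots,0)\}$ (i.e. $x_{k,0}=0$ for all $k$), such that for every $m \geq 1$ and every $k \in \{1,\ldots,d\}$ one has $x_{k,m} \geq x_{k,m-1}$, with strict inequality if and only if $k \equiv m \pmod d$. For $m \geq 1$ let $s(m) \in \{1,\ldots,d\}$ be the residue class of $m$ modulo $d$. A (complete) line in $R_m$ in the $s(m)$-direction is a set of the form $\{(i_1,\ldots,i_{s(m)-1}, j, i_{s(m)+1},\ldots,i_d) : j \in [[0,x_{s(m),m}]]\}$ with $i_r \in [[0,x_{r,m}]]$ fixed for $r \neq s(m)$. For each $m \geq 1$ let $A_m > 1$ and let $\mathcal{L}(m)$ be a set of complete lines in $R_m$ in the $s(m)$-direction whose cardinality is at least $(1 - 1/A_m)$ times the number of all complete lines in $R_m$ in the $s(m)$-direction. If $M_0 \in \mathbb{N}$ satisfies $\sum_{m=1}^{M_0} 1/A_m < 1$, then there exists a sequence of lines $L_m \in \mathcal{L}(m)$, $m \in \{1,\ldots,M_0\}$, such that $L_{m+1} \cap L_m \neq \emptyset$ for every $m \in \{1,\ldots,M_0-1\}$. *)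

From mathcomp Require Import all_boot all_order all_algebra.
Set Implicit Arguments. Unset Strict Implicit. Unset Printing Implicit Defensive.

(* Points of Z^d (in fact of N^d, all boxes lie in N^d); coordinate k of the
   paper (k in {1..d}) is the ordinal k-1 : 'I_d. *)
Definition point (d : nat) := {ffun 'I_d -> nat}.

(* s(m) - 1 : the 0-based index of the direction at step m >= 1,
   i.e. the ordinal k with k+1 = m mod d. *)
Definition sdir (d m : nat) : nat := (m.-1 %% d)%N.

(* A complete line in R_m in direction s(m) is encoded by its base point i:
   its coordinates i r (r != s(m)) are the fixed coordinates in [[0, x_{r,m}]],
   and the s(m)-coordinate of the base point is normalized to 0.  This gives a
   bijection between such base points and complete lines. *)
Definition is_line (d : nat) (x : 'I_d -> nat -> nat) (m : nat) (i : point d) : bool :=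
  [forall r : 'I_d, if nat_of_ord r == sdir d m then i r == 0%N else (i r <= x r m)%N].

Definition on_line (d : nat) (x : 'I_d -> nat -> nat) (m : nat) (i p : point d) : bool :=
  [forall r : 'I_d, if nat_of_ord r == sdir d m then (p r <= x r m)%N else p r == i r].

Definition nb_lines (d : nat) (x : 'I_d -> nat -> nat) (m : nat) : nat :=
  (\prod_(r < d | nat_of_ord r != sdir d m) (x r m).+1)%N.

(* Call a line of L(m) reachable if it ends a chain L_1, ..., L_m of successively
   meeting lines with L_j in L(j), and let n_m be the number of all lines of R_m.
   Lines c of R_m and b of R_{m+1} meet iff they agree outside the directions
   s(m) and s(m+1); forgetting these two coordinates, each fibre contains at most
   x_{s(m+1),m} + 1 lines of R_m and exactly x_{s(m),m+1} + 1 lines of R_{m+1},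
   while n_m and n_{m+1} share the remaining factor.  Hence a set of lines of R_m
   meets at least the same proportion of the lines of R_{m+1}, and intersecting
   with L(m+1) loses at most a proportion 1/A_{m+1}.  By induction at least a
   proportion 1 - sum_{m <= M0} 1/A_m > 0 of the lines of R_{M0} is reachable. *)

From mathcomp Require Import all_boot all_order all_algebra.
From mathcomp Require Import zify lra.
Set Implicit Arguments.
Unset Strict Implicit.
Unset Printing Implicit Defensive.

Import Order.TTheory GRing.Theory Num.Theory.
Local Open Scope ring_scope.

Lemma card_ord_le (n a : nat) : (a < n)%N -> #|[set j : 'I_n | (j <= a)%N]| = a.+1.
Proof.
move=> lt_an; have widen_inj : injective (widen_ord lt_an).
  by move=> u v /(congr1 val) /= /val_inj.
rewrite -[a.+1]card_ord -cardsT -(card_imset _ widen_inj).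
apply: eq_card => j; rewrite inE; apply/idP/imsetP => [le_ja|[k _ ->]].
  by exists (Ordinal (le_ja : (j < a.+1)%N)); rewrite ?inE //; apply/val_inj.
by rewrite /= -ltnS.
Qed.

Lemma density_step (R : realFieldType) (S a g h l i n1 n2 : R) :
  0 < n1 -> 0 <= n2 -> (1 - S) * n1 <= g -> g * n2 <= h * n1 ->
  (1 - a) * n2 <= l -> h + l <= n2 + i -> (1 - (S + a)) * n2 <= i.
Proof.
move=> n1_gt0 n2_ge0 dens_g grow dens_l incl_excl.
have dens_h : (1 - S) * n2 <= h.
  rewrite -(ler_pM2r n1_gt0) mulrAC; apply: le_trans grow.
  exact: ler_wpM2r.
lra.
Qed.

Section Boxes.

Variables (d : nat) (x : 'I_d -> nat -> nat).
Hypothesis hd : (2 <= d)%N.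
Hypothesis hxmono : forall (m : nat) (k : 'I_d), (1 <= m)%N -> (x k m.-1 <= x k m)%N.
Hypothesis hxstrict : forall (m : nat) (k : 'I_d), (1 <= m)%N ->
  ((x k m.-1 < x k m)%N <-> (k.+1 = m %[mod d])%N).

Lemma sdir_neq_succ (m : nat) : (1 <= m)%N -> sdir d m != sdir d m.+1.
Proof.
case: m => // m _; rewrite /sdir /=; apply/eqP => eq_mod.
have lt_md := ltn_pmod m (ltnW hd).
have : (m.+1 %% d == m %% d)%N by rewrite eq_mod.
rewrite -addn1 -modnDml addn1; case: (ltngtP (m %% d).+1 d) => [lt_d|gt_d|eq_d].
- by rewrite modn_small // eqn_leq ltnn.
- lia.
- by rewrite eq_d modnn => /eqP; lia.
Qed.

Lemma x_succ (m : nat) (k : 'I_d) : nat_of_ord k != sdir d m.+1 -> x k m.+1 = x k m.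
Proof.
move=> k_neq; have := hxmono k (ltn0Sn m); rewrite leq_eqVlt => /orP[/eqP //|].
move/(hxstrict k (ltn0Sn m)) => /eqP; rewrite -addn1 -[m.+1]addn1 eqn_modDr.
by rewrite modn_small // => /eqP k_eq; rewrite /sdir /= k_eq eqxx in k_neq.
Qed.

Lemma x_monotone (k : 'I_d) (m n : nat) : (m <= n)%N -> (x k m <= x k n)%N.
Proof.
elim: n => [|n IHn]; first by rewrite leqn0 => /eqP ->.
rewrite leq_eqVlt => /orP[/eqP -> //|]; rewrite ltnS => /IHn le_mn.
exact: leq_trans le_mn (hxmono k (ltn0Sn n)).
Qed.

Lemma nb_lines_gt0 (m : nat) : (0 < nb_lines x m)%N.
Proof. exact: prodn_cond_gt0. Qed.

Let d_gt0 : (0 < d)%N := ltnW hd.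

Definition sdir_ord (m : nat) : 'I_d := Ordinal (ltn_pmod m.-1 d_gt0).

Local Notation s := sdir_ord.

Lemma sdir_ordE (m : nat) (r : 'I_d) : (nat_of_ord r == sdir d m) = (r == s m).
Proof. by []. Qed.

Lemma sdir_ord_succ (m : nat) : (1 <= m)%N -> (s m == s m.+1) = false.
Proof. by move=> m_gt0; apply/negbTE/sdir_neq_succ. Qed.

Definition cross_lines (m : nat) : nat :=
  \prod_(r < d | (r != s m) && (r != s m.+1)) (x r m).+1.

Lemma nb_lines_cross (m : nat) : (1 <= m)%N ->
  nb_lines x m = ((x (s m.+1) m).+1 * cross_lines m)%N.
Proof.
move=> m_gt0; rewrite /nb_lines (bigD1 (s m.+1)) /=; last first.
  by rewrite eq_sym sdir_neq_succ.
by congr (_ * _)%N; apply: eq_bigl => r; rewrite sdir_ordE.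
Qed.

Lemma nb_lines_succ_cross (m : nat) : (1 <= m)%N ->
  nb_lines x m.+1 = ((x (s m) m.+1).+1 * cross_lines m)%N.
Proof.
move=> m_gt0; rewrite /nb_lines (bigD1 (s m)) /=; last first.
  exact: sdir_neq_succ.
congr (_ * _)%N; apply: eq_big => r; first by rewrite sdir_ordE andbC.
by case/andP=> r_neq _; rewrite x_succ.
Qed.

Definition line_chain (Ls : nat -> seq (point d)) (L : nat -> point d) (n : nat) :=
  (forall j : nat, (1 <= j <= n)%N -> L j \in Ls j) /\
  (forall j : nat, (1 <= j)%N -> (j < n)%N ->
     exists p : point d, on_line x j.+1 (L j.+1) p && on_line x j (L j) p).

Lemma line_chain1 (Ls : nat -> seq (point d)) (q : point d) :
  q \in Ls 1%N -> line_chain Ls (fun=> q) 1.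
Proof.
move=> q_in; split=> j; last by lia.
by case/andP=> j_gt0 j_le1; have -> : j = 1%N by lia.
Qed.

Lemma line_chain_rcons (Ls : nat -> seq (point d)) (L : nat -> point d) (n : nat)
    (q : point d) :
  line_chain Ls L n -> q \in Ls n.+1 ->
  (exists p : point d, on_line x n.+1 q p && on_line x n (L n) p) ->
  line_chain Ls (fun j => if j == n.+1 then q else L j) n.+1.
Proof.
move=> [L_in L_meet] q_in q_meet; split=> j.
  case: eqVneq => [-> //|j_neq] /andP[j_gt0 j_le]; apply: L_in.
  by rewrite j_gt0 -ltnS ltn_neqAle j_neq.
move=> j_gt0; rewrite ltnS leq_eqVlt => /orP[/eqP ->|j_lt].
  by rewrite eqxx (ltn_eqF (ltnSn n)).
rewrite (ltn_eqF (j_lt : j.+1 < n.+1)%N) (ltn_eqF (ltnW j_lt : j < n.+1)%N).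
exact: L_meet.
Qed.

Section Grid.

Variables (K M : nat).
Hypothesis x_le : forall (k : 'I_d) (m : nat), (m <= M)%N -> (x k m <= K)%N.

(* Base points are handled in the finite grid [[0,K]]^d, which contains every
   box R_m with m <= M, so that sets of lines can be counted as finsets. *)
Local Notation grid := {ffun 'I_d -> 'I_K.+1}.

Definition point_of (f : grid) : point d := [ffun r => nat_of_ord (f r)].

Lemma point_of_inj : injective point_of.
Proof.
move=> f g /ffunP eq_fg; apply/ffunP => r; apply/val_inj.
by have := eq_fg r; rewrite !ffunE.
Qed.

Definition lines (m : nat) : {set grid} := [set f | is_line x m (point_of f)].

Lemma mem_lines (m : nat) (f : grid) : (f \in lines m) =
  [forall r, if r == s m then nat_of_ord (f r) == 0%N else (f r <= x r m)%N].
Proof. by rewrite inE; apply: eq_forallb => r; rewrite ffunE sdir_ordE. Qed.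

Lemma card_lines (m : nat) : (m <= M)%N -> #|lines m| = nb_lines x m.
Proof.
move=> le_mM; pose bound r := if r == s m then 0%N else x r m.
pose S r := [set j : 'I_K.+1 | (j <= bound r)%N].
have -> : #|lines m| = #|setXn S|.
  apply: eq_card => f; rewrite mem_lines in_setXn; apply: eq_forallb => r.
  by rewrite inE /bound; case: ifP; rewrite ?leqn0.
rewrite cardsXn /nb_lines [RHS]big_mkcond /=; apply: eq_bigr => r _.
rewrite card_ord_le /bound -sdir_ordE; last by rewrite ltnS; case: ifP => // _; apply: x_le.
by case: ifP.
Qed.

Definition grid_set (ps : seq (point d)) : {set grid} := [set f | point_of f \in ps].

Lemma grid_set_sub_lines (m : nat) (ps : seq (point d)) :
  all (is_line x m) ps -> grid_set ps \subset lines m.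
Proof. by move/allP=> ps_lines; apply/subsetP=> f; rewrite !inE => /ps_lines. Qed.

Lemma card_grid_set (m : nat) (ps : seq (point d)) : (m <= M)%N ->
  uniq ps -> all (is_line x m) ps -> #|grid_set ps| = size ps.
Proof.
move=> le_mM uniq_ps /allP ps_lines; rewrite cardE -(size_map point_of).
apply/perm_size/uniq_perm => [||p]; rewrite ?(map_inj_uniq point_of_inj) ?enum_uniq //.
apply/mapP/idP => [[f] | p_in]; first by rewrite mem_enum inE => f_in ->.
have p_grid : point_of [ffun r => inord (p r)] = p.
  apply/ffunP => r; rewrite !ffunE inordK // ltnS.
  have := forallP (ps_lines p p_in) r; case: ifP => _; first by move/eqP ->.
  by move/leq_trans; apply; apply: x_le.
by exists [ffun r => inord (p r)]; rewrite // mem_enum inE p_grid.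
Qed.

(* [c] in R_m and [b] in R_{m+1} meet iff their base points agree outside the
   two directions s(m) and s(m+1). *)
Definition meets (m : nat) (c b : grid) : bool :=
  [forall r, [|| r == s m, r == s m.+1 | c r == b r]].

Definition neighbours (m : nat) (G : {set grid}) : {set grid} :=
  [set b in lines m.+1 | [exists c in G, meets m c b]].

Lemma meets_on_line (m : nat) (c b : grid) : (1 <= m)%N ->
  c \in lines m -> b \in lines m.+1 -> meets m c b ->
  exists p : point d, on_line x m.+1 (point_of b) p && on_line x m (point_of c) p.
Proof.
move=> m_gt0; rewrite !mem_lines => /forallP c_line /forallP b_line /forallP c_meets_b.
have s_neq := sdir_ord_succ m_gt0.
exists [ffun r => if r == s m then point_of b r else point_of c r].
apply/andP; split; apply/forallP => r; rewrite !ffunE sdir_ordE.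
- have := c_line r; have := c_meets_b r.
  case: (eqVneq r (s m.+1)) => [->|r_neq1]; rewrite ?orbT ?(eq_sym (s m.+1)) ?s_neq.
    by move=> _ c_le; apply: leq_trans c_le (hxmono _ (ltn0Sn m)).
  by case: (eqVneq r (s m)) => //= _ /eqP ->.
- have := b_line r; case: (eqVneq r (s m)) => [->|//]; rewrite s_neq.
  by rewrite x_succ // sdir_ordE s_neq.
Qed.

Definition squash (m : nat) (f : grid) : grid :=
  [ffun r => if (r == s m) || (r == s m.+1) then ord0 else f r].

Lemma card_le_squash (m : nat) (G : {set grid}) : G \subset lines m ->
  (#|G| <= #|squash m @: G| * (x (s m.+1) m).+1)%N.
Proof.
move=> /subsetP G_lines.
pose unsquash f := (squash m f, inord (f (s m.+1)) : 'I_(x (s m.+1) m).+1).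
have unsquash_inj : {in G &, injective unsquash}.
  move=> f1 f2 /G_lines + /G_lines +; rewrite !mem_lines => /forallP f1_line /forallP f2_line.
  move=> [/ffunP eq_sq /(congr1 val) eq_s1]; apply/ffunP => r; apply: ord_inj.
  have := f1_line r; have := f2_line r; have := eq_sq r; rewrite !ffunE.
  case: (eqVneq r (s m)) => [-> _ /eqP -> /eqP -> //|r_neq0] /=.
  case: (eqVneq r (s m.+1)) => [-> _ f2_le f1_le|_ /= -> //].
  by move: eq_s1; rewrite /= !inordK.
have -> : (#|squash m @: G| * (x (s m.+1) m).+1 =
    #|setX (squash m @: G) [set: 'I_(x (s m.+1) m).+1]|)%N.
  by rewrite cardsX cardsT card_ord.
rewrite -(card_in_imset unsquash_inj); apply/subset_leq_card/subsetP.
move=> _ /imsetP[f f_in ->].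
by rewrite in_setX in_setT andbT; apply: imset_f.
Qed.

Lemma card_squash_le_neighbours (m : nat) (G : {set grid}) :
  (1 <= m)%N -> (m < M)%N -> G \subset lines m ->
  (#|squash m @: G| * (x (s m) m.+1).+1 <= #|neighbours m G|)%N.
Proof.
move=> m_gt0 lt_mM /subsetP G_lines.
have s_neq : (s m.+1 == s m) = false by rewrite eq_sym sdir_ord_succ.
have x_lt : (x (s m) m.+1 < K.+1)%N by rewrite ltnS; apply: x_le.
pose fill (tj : grid * 'I_(x (s m) m.+1).+1) : grid :=
  [ffun r => if r == s m then inord tj.2 else tj.1 r].
have squash_s : forall t, t \in squash m @: G -> t (s m) = ord0.
  by move=> t /imsetP[f _ ->]; rewrite ffunE eqxx.
have fill_inj : {in setX (squash m @: G) [set: 'I_(x (s m) m.+1).+1] &, injective fill}.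
  move=> [t1 j1] [t2 j2]; rewrite !inE /= !andbT => /squash_s t1s /squash_s t2s.
  move=> /ffunP eq_fill; have -> : j1 = j2.
    apply: val_inj; have := eq_fill (s m); rewrite !ffunE eqxx => /(congr1 val).
    by rewrite /= !inordK // (leq_trans (ltn_ord _)).
  congr (_, _); apply/ffunP => r; have := eq_fill r; rewrite !ffunE.
  by case: (eqVneq r (s m)) => [->|//]; rewrite t1s t2s.
have -> : (#|squash m @: G| * (x (s m) m.+1).+1 =
    #|setX (squash m @: G) [set: 'I_(x (s m) m.+1).+1]|)%N.
  by rewrite cardsX cardsT card_ord.
rewrite -(card_in_imset fill_inj); apply/subset_leq_card/subsetP.
move=> _ /imsetP[[t j] + ->]; rewrite in_setX in_setT andbT => /imsetP[f f_in ->].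
have := G_lines f f_in; rewrite mem_lines => /forallP f_line.
rewrite inE; apply/andP; split.
  rewrite mem_lines; apply/forallP => r; rewrite !ffunE.
  case: (eqVneq r (s m.+1)) => [->|r_neq1]; first by rewrite s_neq orbT.
  case: (eqVneq r (s m)) => [->|r_neq0] /=.
    by rewrite inordK ?(leq_trans (ltn_ord j)) // -ltnS.
  by rewrite x_succ ?sdir_ordE //; have := f_line r; rewrite (negbTE r_neq0).
apply/existsP; exists f; rewrite f_in /=; apply/forallP => r; rewrite !ffunE.
case: (eqVneq r (s m)) => //= _; case: (eqVneq r (s m.+1)) => //= _; exact: eqxx.
Qed.

Lemma card_neighbours (m : nat) (G : {set grid}) :
  (1 <= m)%N -> (m < M)%N -> G \subset lines m ->
  (#|G| * nb_lines x m.+1 <= #|neighbours m G| * nb_lines x m)%N.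
Proof.
move=> m_gt0 lt_mM G_lines.
rewrite nb_lines_succ_cross // nb_lines_cross // !mulnA leq_mul2r; apply/orP; right.
apply: (@leq_trans (#|squash m @: G| * (x (s m.+1) m).+1 * (x (s m) m.+1).+1)).
  by rewrite leq_mul2r card_le_squash ?orbT.
by rewrite mulnAC leq_mul2r card_squash_le_neighbours ?orbT.
Qed.

Section Chains.

Variable Ls : nat -> seq (point d).
Hypothesis hLuniq : forall m : nat, (1 <= m)%N -> uniq (Ls m).
Hypothesis hLlines : forall m : nat, (1 <= m)%N -> all (is_line x m) (Ls m).

Fixpoint reachable (m : nat) : {set grid} :=
  if m is m'.+1 then neighbours m' (reachable m') :&: grid_set (Ls m) else [set: grid].

Lemma reachable_sub_lines (m : nat) : (1 <= m)%N -> reachable m \subset lines m.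
Proof.
case: m => // m _; apply: subset_trans (subsetIr _ _) _.
exact/grid_set_sub_lines/hLlines.
Qed.

Lemma reachable1 : reachable 1 = grid_set (Ls 1).
Proof.
apply/setIidPr/subsetP => b b_in.
rewrite in_set (subsetP (grid_set_sub_lines (hLlines (ltnSn 0))) _ b_in) /=.
by apply/existsP; exists b; rewrite in_setT; apply/forallP => r; rewrite eqxx !orbT.
Qed.

Lemma card_reachable (R : realFieldType) (A : nat -> R)
    (hLcard : forall m : nat, (1 <= m)%N ->
       (1 - (A m)^-1) * (nb_lines x m)%:R <= (size (Ls m))%:R)
    (m : nat) : (1 <= m <= M)%N ->
  (1 - \sum_(1 <= j < m.+1) (A j)^-1) * (nb_lines x m)%:R <= #|reachable m|%:R.
Proof.
elim: m => [//|m IHm] /andP[_ le_mM].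
have card_Ls : #|grid_set (Ls m.+1)| = size (Ls m.+1).
  exact: card_grid_set le_mM (hLuniq (ltn0Sn m)) (hLlines (ltn0Sn m)).
have [m0|m_gt0] := posnP m.
  by subst m; rewrite big_nat1 reachable1 card_Ls; apply: hLcard.
set H := neighbours m (reachable m); set Lm := grid_set (Ls m.+1).
rewrite big_nat_recr //.
apply: (@density_step _ _ _ #|reachable m|%:R #|H|%:R #|Lm|%:R _ (nb_lines x m)%:R).
- by rewrite ltr0n nb_lines_gt0.
- by rewrite ler0n.
- by apply: IHm; rewrite m_gt0 ltnW.
- rewrite -!natrM ler_nat; apply: card_neighbours => //.
  exact: reachable_sub_lines.
- by rewrite card_Ls; apply: hLcard.
have H_Lm_lines : (#|H :|: Lm| <= nb_lines x m.+1)%N.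
  rewrite -card_lines //; apply/subset_leq_card.
  rewrite subUset grid_set_sub_lines ?hLlines // andbT.
  by apply/subsetP => b; rewrite in_set => /andP[].
by rewrite -!natrD ler_nat -cardsUI leq_add2r.
Qed.

Lemma reachable_chain (m : nat) (b : grid) : (1 <= m)%N -> b \in reachable m ->
  exists2 L : nat -> point d, L m = point_of b & line_chain Ls L m.
Proof.
elim: m b => [//|m IHm] b _.
have [->|m_gt0] := posnP m.
  by rewrite reachable1 inE => b_in; exists (fun=> point_of b); last exact: line_chain1.
rewrite /= in_setI in_set => /andP[/andP[b_line /existsP[c /andP[c_in c_meets_b]]] b_in].
have [L L_c chainL] := IHm c m_gt0 c_in.
exists (fun j => if j == m.+1 then point_of b else L j); first by rewrite eqxx.
apply: line_chain_rcons => //; first by rewrite inE in b_in.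
rewrite L_c; apply: meets_on_line => //.
exact: (subsetP (reachable_sub_lines m_gt0)).
Qed.

End Chains.

End Grid.

End Boxes.

Theorem lemma2p3 (R : realFieldType) (d : nat) (hd : (2 <= d)%N)
  (x : 'I_d -> nat -> nat)
  (hx0 : forall k : 'I_d, x k 0%N = 0%N)
  (hxmono : forall (m : nat) (k : 'I_d), (1 <= m)%N -> (x k m.-1 <= x k m)%N)
  (hxstrict : forall (m : nat) (k : 'I_d), (1 <= m)%N ->
     ((x k m.-1 < x k m)%N <-> (k.+1 = m %[mod d])%N))
  (A : nat -> R) (hA : forall m : nat, (1 <= m)%N -> 1 < A m)
  (Ls : nat -> seq (point d))
  (hLuniq : forall m : nat, (1 <= m)%N -> uniq (Ls m))
  (hLlines : forall m : nat, (1 <= m)%N -> all (is_line x m) (Ls m))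
  (hLcard : forall m : nat, (1 <= m)%N ->
     (1 - (A m)^-1) * (nb_lines x m)%:R <= (size (Ls m))%:R :> R)
  (M0 : nat)
  (hsum : \sum_(1 <= m < M0.+1) (A m)^-1 < 1 :> R) :
  exists L : nat -> point d,
    (forall m : nat, (1 <= m <= M0)%N -> L m \in Ls m) /\
    (forall m : nat, (1 <= m)%N -> (m < M0)%N ->
       exists p : point d, on_line x m.+1 (L m.+1) p && on_line x m (L m) p).
Proof.
have [M0_eq0|M0_gt0] := posnP M0.
  by exists (fun=> [ffun=> 0%N]); rewrite M0_eq0; split=> m; lia.
pose K := (\max_(k < d) x k M0)%N.
have x_le_K (k : 'I_d) (m : nat) : (m <= M0)%N -> (x k m <= K)%N.
  by move=> le_mM0; apply: leq_trans (x_monotone hxmono k le_mM0) (leq_bigmax k).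
have M0_range : (1 <= M0 <= M0)%N by rewrite M0_gt0 leqnn.
have dens_pos : 0 < (1 - \sum_(1 <= m < M0.+1) (A m)^-1) * (nb_lines x M0)%:R.
  by rewrite mulr_gt0 ?subr_gt0 // ltr0n nb_lines_gt0.
have := lt_le_trans dens_pos
  (card_reachable hd hxmono hxstrict x_le_K hLuniq hLlines hLcard M0_range).
rewrite ltr0n card_gt0 => /set0Pn[b b_reach].
have [L _ chain_L] := reachable_chain hxmono hxstrict hLlines M0_gt0 b_reach.
by exists L.
Qed.
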